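(* Let $\mathcal{S}(\lambda)$ be an $(n+r)\times (n+r)$ system polynomial (regular or singular) of degree $m$. Then every Fiedler pencil $\mathbb{L}_{\sigma}(\lambda)$ of $\mathcal{S}(\lambda)$ is a Rosenbrock linearization of $\mathcal{S}(\lambda)$, i.e., there exist $nm\times nm$ unimodular matrix polynomials $U(\lambda), V(\lambda)$ such that $$\left[\begin{array}{c|c} U(\lambda) & 0\\ \hline 0 & I_r\end{array}\right]\mathbb{L}_\sigma(\lambda)\left[\begin{array}{c|c} V(\lambda) & 0\\ \hline 0 & I_r\end{array}\right] = \left[\begin{array}{c|c} I_{(m-1)n} & 0\\ \hline 0 & \mathcal{S}(\lambda)\end{array}\right].$$
   Context: A system polynomial of degree $m$ is $\mathcal{S}(\lambda) = \left[\begin{array}{c|c} P(\lambda) & C\\ \hline B & A-\lambda E\end{array}\right]$ with $P(\lambda)=\sum_{j=0}^m\lambda^j A_j$ an $n\times n$ matrix polynomial of degree $m$ ($A_m\ne0$), $C\in\mathbb{C}^{n\times r}$, $B\in\mathbb{C}^{r\times n}$ constant, and $A-\lambda E$ an $r\times r$ pencil. Its Fiedler matrices are $\mathbb{M}_0 = \left[\begin{array}{c|c} M_0 & -e_m\otimes C\\ \hline -e_m^T\otimes B & -A\end{array}\right]$, $\mathbb{M}_m=\mathrm{diag}(M_m,-E)$, $\mathbb{M}_i=\mathrm{diag}(M_i,I_r)$ ($1\le i\le m-1$), where $e_m$ is the $m$-th column of $I_m$, $M_0=\mathrm{diag}(I_{(m-1)n},-A_0)$, $M_m=\mathrm{diag}(A_m,I_{(m-1)n})$,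 $M_i=\mathrm{diag}\left(I_{(m-i-1)n},\left[\begin{smallmatrix}-A_i & I_n\\ I_n&0\end{smallmatrix}\right],I_{(i-1)n}\right)$. For a bijection $\sigma:\{0,\ldots,m-1\}\to\{1,\ldots,m\}$ the Fiedler pencil is $\mathbb{L}_\sigma(\lambda)=\lambda\mathbb{M}_m-\mathbb{M}_{\sigma^{-1}(1)}\cdots\mathbb{M}_{\sigma^{-1}(m)}$. A matrix polynomial is unimodular if its determinant is a nonzero constant. An $(nm+r)\times(nm+r)$ system pencil $\mathbb{L}(\lambda)$ is a Rosenbrock linearization of an $(n+r)\times(n+r)$ system polynomial $\mathcal{X}(\lambda)$ of degree $m>1$ if there are $nm\times nm$ unimodular $U(\lambda),V(\lambda)$ with $\mathrm{diag}(U(\lambda),I_r)\,\mathbb{L}(\lambda)\,\mathrm{diag}(V(\lambda),I_r)=\mathrm{diag}(I_{(m-1)n},\mathcal{X}(\lambda))$. *)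

From HB Require Import structures.
From mathcomp Require Import all_boot all_order all_algebra all_fingroup.
Set Implicit Arguments. Unset Strict Implicit. Unset Printing Implicit Defensive.
Import GRing.Theory.
Local Open Scope ring_scope.

Lemma off_lt (m n : nat) (p : 'I_(m * n)) : (modn p n < n)%N.
Proof.
case: n p => [|n] p; last by rewrite ltn_mod.
by case: p => i; rewrite muln0.
Qed.

Definition off (m n : nat) (p : 'I_(m * n)) : 'I_n := Ordinal (off_lt p).

Definition blockmx (F : fieldType) (m n : nat) (f : nat -> nat -> 'M[F]_n)
  : 'M[F]_(m * n) :=
  \matrix_(p, q) f (divn p n) (divn q n) (off p) (off q).

Definition M0blk (F : fieldType) (m n : nat) (A0 : 'M[F]_n) (b c : nat) : 'M[F]_n :=
  if b == c then (if b == m.-1 then - A0 else 1%:M) else 0.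

Definition Mmblk (F : fieldType) (n : nat) (Am : 'M[F]_n) (b c : nat) : 'M[F]_n :=
  if b == c then (if b == 0%N then Am else 1%:M) else 0.

(* blocks of M_i = diag(I_{(m-i-1)n}, [[-A_i, I],[I, 0]], I_{(i-1)n}), 1 <= i <= m-1 *)
Definition Miblk (F : fieldType) (m n i : nat) (Ai : 'M[F]_n) (b c : nat) : 'M[F]_n :=
  let k := (m - i - 1)%N in
  if (b == k) && (c == k) then - Ai
  else if (b == k) && (c == k.+1) then 1%:M
  else if (b == k.+1) && (c == k) then 1%:M
  else if (b == k.+1) && (c == k.+1) then 0
  else if b == c then 1%:M else 0.

(* e_m (x) C  (nm x r)  and  e_m^T (x) B  (r x nm) *)
Definition emC (F : fieldType) (m n r : nat) (C : 'M[F]_(n, r)) : 'M[F]_(m * n, r) :=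
  \matrix_(p, q) if divn p n == m.-1 then C (off p) q else 0.
Definition emB (F : fieldType) (m n r : nat) (B : 'M[F]_(r, n)) : 'M[F]_(r, m * n) :=
  \matrix_(p, q) if divn q n == m.-1 then B p (off q) else 0.

Definition fiedler_mx (F : fieldType) (m n r : nat) (A : nat -> 'M[F]_n)
  (C : 'M[F]_(n, r)) (B : 'M[F]_(r, n)) (Ap Ep : 'M[F]_r) (i : nat)
  : 'M[F]_(m * n + r) :=
  if i == 0%N then
    block_mx (blockmx m (M0blk m (A 0%N))) (- emC m C) (- emB m B) (- Ap)
  else if i == m then
    block_mx (blockmx m (Mmblk (A m))) 0 0 (- Ep)
  else
    block_mx (blockmx m (Miblk m i (A i))) 0 0 1%:M.

(* Fiedler pencil L_sigma(X) = X M_m - M_{sigma^-1(1)} ... M_{sigma^-1(m)}.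
   The bijection sigma : {0..m-1} -> {1..m} is encoded by s : 'S_m with
   sigma(j) = s j + 1, so sigma^-1(k+1) = s^-1 k. *)
Definition fiedler_pencil (F : fieldType) (m n r : nat) (A : nat -> 'M[F]_n)
  (C : 'M[F]_(n, r)) (B : 'M[F]_(r, n)) (Ap Ep : 'M[F]_r) (s : 'S_m)
  : 'M[{poly F}]_(m * n + r) :=
  'X *: map_mx polyC (fiedler_mx m A C B Ap Ep m)
  - map_mx polyC (\big[mulmx/1%:M]_(k < m) fiedler_mx m A C B Ap Ep ((s^-1)%g k)).

Definition syspoly (F : fieldType) (m n r : nat) (A : nat -> 'M[F]_n)
  (C : 'M[F]_(n, r)) (B : 'M[F]_(r, n)) (Ap Ep : 'M[F]_r) : 'M[{poly F}]_(n + r) :=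
  block_mx (\sum_(j < m.+1) 'X^j *: map_mx polyC (A j)) (map_mx polyC C)
           (map_mx polyC B) (map_mx polyC Ap - 'X *: map_mx polyC Ep).

Definition unimodular (F : fieldType) (k : nat) (U : 'M[{poly F}]_k) : Prop :=
  exists c : F, c != 0 /\ \det U = c%:P.

Lemma rl_cast (n r m : nat) : (0 < m)%N -> (m.-1 * n + (n + r) = m * n + r)%N.
Proof. by case: m => // m _; rewrite /= mulSn addnA [(m * n + n)%N]addnC. Qed.

Definition rosenbrock_lin (F : fieldType) (n r m : nat)
  (e : (m.-1 * n + (n + r) = m * n + r)%N)
  (L : 'M[{poly F}]_(m * n + r)) (X : 'M[{poly F}]_(n + r)) : Prop :=
  exists U V : 'M[{poly F}]_(m * n),
    [/\ unimodular U, unimodular V &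
      block_mx U 0 0 1%:M *m L *m block_mx V 0 0 1%:M
      = castmx (e, e) (block_mx (1%:M : 'M_(m.-1 * n)) 0 0 X)].

From HB Require Import structures.
From mathcomp Require Import all_boot all_order all_algebra all_fingroup.
From mathcomp Require Import zify.
Set Implicit Arguments. Unset Strict Implicit. Unset Printing Implicit Defensive.
Import GRing.Theory.
Local Open Scope ring_scope.

(* Let Pi_j be the product, in the order prescribed by sigma, of the Fiedler
   factors M_i with i <= j.  Since M_i and M_j commute whenever |i - j| >= 2, the
   factor M_j stands at one end of Pi_j: Pi_j = M_j Pi_(j-1) or Pi_(j-1) M_j.
   Consider the pencils
     S_k = X diag(0, ..., 0, T_k, I, ..., I, -E) - Pi_(m-1-k)
   (T_k in block k) with T_k = X^k A_m + ... + X A_(m-k+1) + A_(m-k), so that S_0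
   is the Fiedler pencil.  Peeling off M_(m-1-k), whose active 2 x 2 block
   [[-A, I], [I, 0]] is invertible over F, and clearing the two X-entries this
   creates next to the diagonal by block transvections, which Pi_(m-2-k) leaves
   alone because it acts as the identity on block k, turns S_k into S_(k+1) by
   unimodular transformations of the first mn rows and columns.  Finally
   S_(m-1) = X diag(0, ..., 0, T_(m-1), -E) - M_0 has leading block
   diag(-I, ..., -I, P(X)) and meets B and C only in its last block row and
   column, so a change of signs yields diag(I, S(X)). *)

HB.instance Definition _ (R : pzSemiRingType) (p : nat) :=
  Monoid.isLaw.Build 'M[R]_p 1%:M (@mulmx R p p p) (@mulmxA R p p p p)
    (@mul1mx R p p) (@mulmx1 R p p).

Section SquareMatrices.
Variables (R : pzRingType) (p : nat).
Implicit Types (X Y Q E : 'M[R]_p).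

Lemma big_mulmx_commute (I : eqType) (v : seq I) (f : I -> 'M[R]_p) X :
  {in v, forall i, f i *m X = X *m f i} ->
  \big[mulmx/1%:M]_(i <- v) f i *m X = X *m \big[mulmx/1%:M]_(i <- v) f i.
Proof.
move=> fX; rewrite big_seq; apply: (big_ind (fun M => M *m X = X *m M)) => //.
  by rewrite mul1mx mulmx1.
by move=> M N MX NX; rewrite -mulmxA NX !mulmxA MX.
Qed.

Lemma big_mulmx_extract (I : eqType) (u : seq I) (f : I -> 'M[R]_p) (j k : I) :
  uniq u -> j \in u -> k \in u -> k != j ->
  {in u, forall i, i != j -> i != k -> f i *m f j = f j *m f i} ->
  let Q := \big[mulmx/1%:M]_(i <- u | i != j) f i in
  \big[mulmx/1%:M]_(i <- u) f i = f j *m Q \/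
  \big[mulmx/1%:M]_(i <- u) f i = Q *m f j.
Proof.
move=> uu ju ku kj fC; move: uu ku fC; case/splitPr: ju => u1 u2 + ku fC Q.
rewrite cat_uniq /= => /and3P[_ /norP[ju1 u12] /andP[ju2 _]].
have drop_j v : j \notin v ->
    \big[mulmx/1%:M]_(i <- v | i != j) f i = \big[mulmx/1%:M]_(i <- v) f i.
  move=> jv; rewrite big_seq_cond [RHS]big_seq.
  by apply: eq_bigl => i; apply/andb_idr => /(memPn jv).
have -> : Q = \big[mulmx/1%:M]_(i <- u1) f i *m \big[mulmx/1%:M]_(i <- u2) f i.
  by rewrite /Q big_cat big_cons eqxx /= !drop_j.
rewrite big_cat big_cons /=.
move: ku; rewrite mem_cat inE (negbTE kj) /= => /orP[ku1|ku2].
  right; rewrite -mulmxA -big_mulmx_commute ?mulmxA // => i iu2.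
  apply: fC; first by rewrite mem_cat inE iu2 !orbT.
    by apply: contraNneq ju2 => <-.
  by apply: contraNneq u12 => ik; apply/hasP; exists i; rewrite // ik.
left; rewrite mulmxA big_mulmx_commute ?mulmxA // => i iu1.
apply: fC; first by rewrite mem_cat iu1.
  by apply: contraNneq ju1 => <-.
apply: contraNneq u12 => ik; apply/hasP; exists k => //; by rewrite -ik.
Qed.

Lemma commute_1addmx X Y : X *m Y = 0 -> Y *m X = 0 ->
  (1%:M + X) *m (1%:M + Y) = (1%:M + Y) *m (1%:M + X).
Proof.
move=> XY YX; rewrite !(mulmxDl, mulmxDr) !(mul1mx, mulmx1) XY YX !addr0.
by rewrite addrAC.
Qed.

Lemma mulmx_1add_sandwich X Y Q E : X *m E = X -> E *m Y = Y ->
  E *m Q = E -> Q *m E = E ->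
  (1%:M + X) *m Q *m (1%:M + Y) = Q + X + Y + X *m Y.
Proof.
move=> XE EY EQ QE.
have XQ : X *m Q = X by rewrite -XE -mulmxA EQ.
have QY : Q *m Y = Y by rewrite -EY mulmxA QE.
by rewrite !(mulmxDl, mulmxDr) !(mul1mx, mulmx1) XQ QY !addrA.
Qed.

End SquareMatrices.

Lemma unitmx_1add_nilp (R : comUnitRingType) p (X : 'M[R]_p) :
  X *m X = 0 -> 1%:M + X \in unitmx.
Proof.
move=> XX; apply: (proj1 (@mulmx1_unit _ _ _ (1%:M - X) _)).
by rewrite mulmxDl mul1mx mulmxBr mulmx1 XX subr0 subrK.
Qed.

Lemma unitmx_unimodular (F : fieldType) p (U : 'M[{poly F}]_p) :
  U \in unitmx -> unimodular U.
Proof.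
rewrite unitmxE poly_unitE => /andP[/size_poly1P[c c0 dU] _].
by exists c.
Qed.

Lemma castmx_block (R : Type) (a b r : nat) (e : a = b) (e' : (a + r = b + r)%N)
  (X11 : 'M[R]_a) (X12 : 'M[R]_(a, r)) (X21 : 'M[R]_(r, a)) (X22 : 'M[R]_r) :
  castmx (e', e') (block_mx X11 X12 X21 X22) =
  block_mx (castmx (e, e) X11) (castmx (e, erefl r) X12) (castmx (erefl r, e) X21) X22.
Proof. by case: b / e e' => e'; rewrite !castmx_id. Qed.

Definition sys_equiv (R : comUnitRingType) p r (L L' : 'M[R]_(p + r)) :=
  exists U V : 'M[R]_p, [/\ U \in unitmx, V \in unitmx &
    block_mx U 0 0 1%:M *m L *m block_mx V 0 0 1%:M = L'].

Section SystemEquivalence.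
Variables (R : comUnitRingType) (p r : nat).
Implicit Types L : 'M[R]_(p + r).

Lemma block_diag1_mul (U V : 'M[R]_p) :
  block_mx (U *m V) 0 0 1%:M = block_mx U 0 0 1%:M *m block_mx V 0 0 (1%:M : 'M[R]_r).
Proof. by rewrite mulmx_block !(mulmx0, mul0mx, addr0, add0r, mulmx1). Qed.

Lemma sys_equiv_refl L : sys_equiv L L.
Proof. by exists 1%:M, 1%:M; rewrite unitmx1 -scalar_mx_block mul1mx mulmx1. Qed.

Lemma sys_equiv_trans L1 L2 L3 : sys_equiv L1 L2 -> sys_equiv L2 L3 -> sys_equiv L1 L3.
Proof.
move=> [U [V [uU uV <-]]] [U' [V' [uU' uV' <-]]].
exists (U' *m U), (V *m V'); rewrite !unitmx_mul uU uV uU' uV'; split=> //.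
by rewrite !block_diag1_mul !mulmxA.
Qed.

End SystemEquivalence.

Lemma eqnSF k : (k == k.+1) = false. Proof. by elim: k. Qed.
Lemma eqSnF k : (k.+1 == k) = false. Proof. by elim: k. Qed.
Lemma ltSnF k : (k.+1 < k)%N = false. Proof. by rewrite ltnNge leqnSn. Qed.

Section BlockMatrices.
Variables (R : pzRingType) (m n : nat).
Implicit Types (f g : nat -> nat -> 'M[R]_n) (h : nat -> 'M[R]_n).

Lemma divn_blk_lt (k p : nat) : (p < k * n)%N -> (p %/ n < k)%N.
Proof. by case: n => [|n']; [rewrite muln0|rewrite ltn_divLR]. Qed.

Lemma blk_lt (p : 'I_(m * n)) : (p %/ n < m)%N.
Proof. exact: divn_blk_lt. Qed.

Definition blkmx f : 'M[R]_(m * n) :=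
  \matrix_(p, q) f (p %/ n)%N (q %/ n)%N (off p) (off q).

Lemma eq_blkmx f g :
  (forall b c, (b < m)%N -> (c < m)%N -> f b c = g b c) -> blkmx f = blkmx g.
Proof. by move=> fg; apply/matrixP=> i j; rewrite !mxE fg // blk_lt. Qed.

Lemma blkmxD f g : blkmx f + blkmx g = blkmx (fun b c => f b c + g b c).
Proof. by apply/matrixP=> i j; rewrite !mxE. Qed.

Lemma blkmxN f : - blkmx f = blkmx (fun b c => - f b c).
Proof. by apply/matrixP=> i j; rewrite !mxE. Qed.

Lemma blkmxZ (x : R) f : x *: blkmx f = blkmx (fun b c => x *: f b c).
Proof. by apply/matrixP=> i j; rewrite !mxE. Qed.

Lemma blkmx0 : blkmx (fun _ _ => 0) = 0.
Proof. by apply/matrixP=> i j; rewrite !mxE. Qed.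

Lemma blk_index_lt (d : 'I_m) (o : 'I_n) : (d * n + o < m * n)%N.
Proof.
case: d o => d dm [o on] /=.
apply: (@leq_trans (d * n + n)); first by rewrite ltn_add2l.
by rewrite addnC -mulSn leq_mul2r dm orbT.
Qed.

Definition blk_index (x : 'I_m * 'I_n) : 'I_(m * n) :=
  Ordinal (blk_index_lt x.1 x.2).

Lemma blk_index_div x : (blk_index x %/ n)%N = x.1.
Proof.
case: x => d [o on] /=.
by rewrite divnMDl ?(divn_small on) ?addn0 // (leq_ltn_trans _ on).
Qed.

Lemma blk_index_off x : off (blk_index x) = x.2.
Proof. by apply: val_inj; case: x => d [o on] /=; rewrite modnMDl modn_small. Qed.

Lemma sum_blk_index (V : nmodType) (G : 'I_(m * n) -> V) :
  \sum_(p : 'I_(m * n)) G p = \sum_(d < m) \sum_(o < n) G (blk_index (d, o)).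
Proof.
rewrite pair_bigA (reindex blk_index) //=.
exists (fun p => (Ordinal (blk_lt p), off p)) => [[d o] _|p _].
  by rewrite blk_index_off; congr pair; apply: val_inj; exact: (blk_index_div (d, o)).
by apply: val_inj; rewrite /= -divn_eq.
Qed.

Lemma eq_ord_blk (p q : 'I_(m * n)) :
  (p == q) = ((p %/ n)%N == (q %/ n)%N) && (off p == off q).
Proof.
apply/eqP/andP => [->|[/eqP pq /eqP]]; first by [].
move=> /(congr1 val) /= opq.
by apply: val_inj; rewrite /= (divn_eq p n) (divn_eq q n) pq opq.
Qed.

Lemma mulmx_blkmx f g :
  blkmx f *m blkmx g = blkmx (fun b c => \sum_(d < m) f b d *m g d c).
Proof.
apply/matrixP=> i j; rewrite !mxE sum_blk_index summxE; apply: eq_bigr => d _.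
by rewrite mxE; apply: eq_bigr => o _; rewrite !mxE blk_index_div blk_index_off.
Qed.

Lemma blkmx1 : blkmx (fun b c => if b == c then 1%:M else 0) = 1%:M.
Proof.
apply/matrixP=> i j; rewrite !mxE eq_ord_blk.
by case: eqP => _ //=; rewrite mxE.
Qed.

Lemma mulmx_blkmx_disjoint f g (S S' : pred nat) :
  (forall b c, ~~ (S b && S c) -> f b c = 0) ->
  (forall b c, ~~ (S' b && S' c) -> g b c = 0) ->
  (forall d, S d -> ~~ S' d) -> blkmx f *m blkmx g = 0.
Proof.
move=> fS gS' SS'; rewrite mulmx_blkmx -blkmx0; apply: eq_blkmx => b c _ _.
apply: big1 => d _; case Sd: (S d); first by rewrite gS' ?mulmx0 // (negbTE (SS' _ Sd)).
by rewrite fS ?mul0mx // Sd andbF.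
Qed.

Definition diagblk h := blkmx (fun b c => if b == c then h b else 0).

Definition unitblk (x : 'M[R]_n) (b0 c0 : nat) :=
  blkmx (fun b c => if (b == b0) && (c == c0) then x else 0).

Lemma sum_ord_eq (V : nmodType) (b : nat) (X : V) : (b < m)%N ->
  \sum_(d < m) (if (d : nat) == b then X else 0) = X.
Proof.
move=> bm; rewrite (bigD1 (Ordinal bm)) //= eqxx big1 ?addr0 // => d.
by rewrite -val_eqE => /negbTE ->.
Qed.

Lemma diagblk1 : diagblk (fun _ => 1%:M) = 1%:M.
Proof. exact: blkmx1. Qed.

Lemma mul_diagblk h h' : diagblk h *m diagblk h' = diagblk (fun b => h b *m h' b).
Proof.
rewrite mulmx_blkmx; apply: eq_blkmx => b c bm _.
rewrite -[RHS](sum_ord_eq _ bm); apply: eq_bigr => d _.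
rewrite [b == d]eq_sym; case: eqP => [->|]; last by rewrite mul0mx.
by case: eqP => [->|]; rewrite ?mulmx0.
Qed.

Lemma mul_diagblk_unitblk h x b0 c0 :
  diagblk h *m unitblk x b0 c0 = unitblk (h b0 *m x) b0 c0.
Proof.
rewrite mulmx_blkmx; apply: eq_blkmx => b c bm _.
rewrite -[RHS](sum_ord_eq _ bm); apply: eq_bigr => d _.
rewrite [b == d]eq_sym; case: eqP => [->|]; last by rewrite mul0mx.
by case: eqP => [->|] /=; case: (c == c0); rewrite ?mulmx0.
Qed.

Lemma mul_unitblk_diagblk h x b0 c0 :
  unitblk x b0 c0 *m diagblk h = unitblk (x *m h c0) b0 c0.
Proof.
rewrite mulmx_blkmx; apply: eq_blkmx => b c _ cm.
rewrite -[RHS](sum_ord_eq _ cm); apply: eq_bigr => d _.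
have [->|_] := eqVneq (d : nat) c; last by rewrite mulmx0.
by case: (b == b0); have [->|] := eqVneq c c0; rewrite /= ?mul0mx.
Qed.

Lemma mul_unitblk x y b0 c0 c1 d0 : (c0 < m)%N ->
  unitblk x b0 c0 *m unitblk y c1 d0 =
  if c0 == c1 then unitblk (x *m y) b0 d0 else 0.
Proof.
move=> c0m; rewrite mulmx_blkmx; have [<-|c01] := eqVneq c0 c1; last first.
  rewrite -blkmx0; apply: eq_blkmx => b c _ _; apply: big1 => -[d dm] _ /=.
  have [->|_] := eqVneq d c0; last by rewrite andbF mul0mx.
  by rewrite (negbTE c01) mulmx0.
apply: eq_blkmx => b c _ _; rewrite -[RHS](sum_ord_eq _ c0m).
apply: eq_bigr => -[d dm] _ /=; have [_|_] := eqVneq d c0; last by rewrite andbF mul0mx.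
by case: (b == b0); case: (c == d0); rewrite ?mulmx0 ?mul0mx.
Qed.

Lemma unitblk0 b c : unitblk 0 b c = 0.
Proof. by rewrite -blkmx0; apply: eq_blkmx => x y _ _; case: ifP. Qed.

Lemma blk_last (p : 'I_(m * n)) (o : 'I_n) : (p : nat) = (m.-1 * n + o)%N ->
  (p %/ n)%N = m.-1 /\ off p = o.
Proof.
case: o => o on /= po; split; last by apply: val_inj; rewrite /= po modnMDl modn_small.
by rewrite po divnMDl ?divn_small ?addn0 // (leq_ltn_trans _ on).
Qed.

End BlockMatrices.

Ltac neq_simp := repeat match goal with
  | H : is_true (?a != ?b) |- context [?a == ?b] => rewrite (negbTE H)
  | H : is_true (?a != ?b) |- context [?b == ?a] => rewrite (eq_sym b a) (negbTE H)
  | H : is_true (?x != ?k) |- context [(?x < ?k.+1)%N] =>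
      rewrite (ltnS x k) (leq_eqVlt x k) (negbTE H) /=
  end.

Ltac blk_cases x k :=
  have [?|?] := eqVneq x k; [subst x|have [?|?] := eqVneq x k.+1; [subst x|]].

Ltac blk_simp :=
  rewrite ?(eqxx, eqnSF, eqSnF, ltnn, ltnSn, ltSnF, andbT, andbF, andTb, andFb) /=;
  neq_simp; rewrite ?(eqxx, eqnSF, eqSnF, ltnn, ltnSn, ltSnF, andbT, andbF, andTb, andFb) /=;
  rewrite ?(mul1mx, mulmx1, mul0mx, mulmx0, scaler0, addr0, add0r, scale0r).

Definition pivot_diag (R : pzRingType) n (j : nat) (T : 'M[R]_n) (d : nat) : 'M[R]_n :=
  if (d < j)%N then 0 else if d == j then T else 1%:M.

Section FiedlerBlock.
Variables (R : comPzRingType) (m n k : nat).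
Hypothesis km : (k.+1 < m)%N.
Local Notation diagblk := (@diagblk R m n).
Local Notation unitblk := (@unitblk R m n).
Implicit Types (x : R) (T Aj : 'M[R]_n).

Definition fiedler_blk Aj :=
  diagblk (fun d => if d == k then - Aj else if d == k.+1 then 0 else 1%:M)
  + unitblk 1%:M k k.+1 + unitblk 1%:M k.+1 k.

Definition fiedler_blk_inv Aj :=
  diagblk (fun d => if d == k then 0 else if d == k.+1 then Aj else 1%:M)
  + unitblk 1%:M k k.+1 + unitblk 1%:M k.+1 k.

Let blk_rules := (mul_diagblk, mul_diagblk_unitblk, mul_unitblk_diagblk, mul_unitblk,
  mulmx1, mul1mx, mulmx0, mul0mx, scaler0, addr0, add0r, unitblk0).

Lemma mul_fiedler_blk_inv Aj : fiedler_blk_inv Aj *m fiedler_blk Aj = 1%:M.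
Proof.
have km' := ltnW km.
rewrite -diagblk1 !(mulmxDl, mulmxDr) !blk_rules // ?eqxx ?eqnSF ?eqSnF /= !blk_rules //.
rewrite ?eqSnF ?eqnSF /= ?scaler0 ?addr0 ?add0r /diagblk /unitblk !blkmxD.
apply: eq_blkmx => x y _ _; blk_cases x k; blk_cases y k; blk_simp => //.
by rewrite subrr.
Qed.

Lemma mul_fiedler_blkV Aj : fiedler_blk Aj *m fiedler_blk_inv Aj = 1%:M.
Proof. exact/mulmx1C/mul_fiedler_blk_inv. Qed.

Lemma fiedler_blk_reduceL x T Aj :
  (1%:M + unitblk (x *: T) k.+1 k) *m fiedler_blk_inv Aj
    *m (x *: diagblk (pivot_diag k T)) *m (1%:M + unitblk (x *: 1%:M) k k.+1)
  = x *: diagblk (pivot_diag k.+1 (x *: T + Aj)) + unitblk (x *: T) k.+1 k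
    + unitblk (x *: 1%:M) k k.+1 + unitblk (x *: T) k.+1 k *m unitblk (x *: 1%:M) k k.+1.
Proof.
have km' := ltnW km.
rewrite -diagblk1 !(mulmxDl, mulmxDr) -?scalemxAr -?scalemxAl.
rewrite !blk_rules // ?eqxx ?eqnSF ?eqSnF /= !blk_rules //.
rewrite ?eqSnF ?eqnSF /= ?scaler0 ?addr0 ?add0r /diagblk /unitblk !blkmxZ !blkmxD.
apply: eq_blkmx => y z _ _; rewrite /pivot_diag; blk_cases y k; blk_cases z k; blk_simp => //.
by rewrite scalemxAl scalerDr (addrC (x *: (x *: T))).
Qed.

Lemma fiedler_blk_reduceR x T Aj :
  (1%:M + unitblk (x *: 1%:M) k.+1 k) *m (x *: diagblk (pivot_diag k T))
    *m fiedler_blk_inv Aj *m (1%:M + unitblk (x *: T) k k.+1)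
  = x *: diagblk (pivot_diag k.+1 (x *: T + Aj)) + unitblk (x *: 1%:M) k.+1 k
    + unitblk (x *: T) k k.+1 + unitblk (x *: 1%:M) k.+1 k *m unitblk (x *: T) k k.+1.
Proof.
have km' := ltnW km.
rewrite -diagblk1 !(mulmxDl, mulmxDr) -?scalemxAr -?scalemxAl.
rewrite !blk_rules // ?eqxx ?eqnSF ?eqSnF /= !blk_rules //.
rewrite ?eqSnF ?eqnSF /= ?scaler0 ?addr0 ?add0r /diagblk /unitblk !blkmxZ !blkmxD.
apply: eq_blkmx => y z _ _; rewrite /pivot_diag; blk_cases y k; blk_cases z k; blk_simp => //.
by rewrite !scalemx1 !mul_scalar_mx scalerDr (addrC (x *: (x *: T)) (x *: Aj)).
Qed.

End FiedlerBlock.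

Section Reduction.
Variables (R : comUnitRingType) (m n r k : nat).
Hypothesis km : (k.+1 < m)%N.
Variables (x : R) (T Aj : 'M[R]_n) (D : 'M[R]_r) (Q : 'M[R]_(m * n + r)).
Local Notation unitblk := (@unitblk R m n).
Local Notation hat X := (block_mx X 0 0 (0 : 'M[R]_r)).
Local Notation E := (hat (unitblk 1%:M k k)).
Hypotheses (QE : Q *m E = E) (EQ : E *m Q = E).

Let pencil j (S : 'M[R]_n) :=
  x *: block_mx (diagblk m (pivot_diag j S)) 0 0 D.
Let Mj := block_mx (fiedler_blk m k Aj) 0 0 (1%:M : 'M[R]_r).
Let Mj_inv := fiedler_blk_inv m k Aj.

Lemma mulmx_hat (X Y : 'M[R]_(m * n)) : hat X *m hat Y = hat (X *m Y).
Proof. by rewrite mulmx_block !(mulmx0, mul0mx, addr0). Qed.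

Lemma add1_hat (X : 'M[R]_(m * n)) : 1%:M + hat X = block_mx (1%:M + X) 0 0 1%:M.
Proof. by rewrite (scalar_mx_block (m * n) r) add_block_mx !addr0. Qed.

Lemma unitmx_fiedler_blk_inv : Mj_inv \in unitmx.
Proof. exact: (proj1 (mulmx1_unit (mul_fiedler_blk_inv km Aj))). Qed.

Lemma sys_equiv_reduceL :
  sys_equiv (pencil k T - Mj *m Q) (pencil k.+1 (x *: T + Aj) - Q).
Proof.
have k_m := ltnW km.
set a := unitblk (x *: T) k.+1 k; set b := unitblk (x *: 1%:M) k k.+1.
exists ((1%:M + a) *m Mj_inv), (1%:M + b); split.
- by rewrite unitmx_mul unitmx_fiedler_blk_inv unitmx_1add_nilp // mul_unitblk // eqnSF.
- by rewrite unitmx_1add_nilp // mul_unitblk // eqSnF.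
set c := hat a + hat b + hat (a *m b).
rewrite mulmxBr mulmxBl.
have -> : block_mx ((1%:M + a) *m Mj_inv) 0 0 1%:M *m pencil k T *m block_mx (1%:M + b) 0 0 1%:M
    = pencil k.+1 (x *: T + Aj) + c.
  rewrite /pencil !scale_block_mx !mulmx_block !(mulmx0, mul0mx, addr0, add0r, mul1mx, mulmx1, scaler0).
  by rewrite fiedler_blk_reduceL // /c !add_block_mx !addr0 !addrA.
have -> : block_mx ((1%:M + a) *m Mj_inv) 0 0 1%:M *m (Mj *m Q) *m block_mx (1%:M + b) 0 0 1%:M
    = Q + c.
  rewrite mulmxA mulmx_block !(mulmx0, mul0mx, addr0, add0r, mul1mx, mulmx1).
  rewrite -[(1%:M + a) *m _ *m _]mulmxA /Mj_inv mul_fiedler_blk_inv // mulmx1 -!add1_hat.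
  rewrite (mulmx_1add_sandwich (E := E)) // ?mulmx_hat /c ?addrA // /a /b mul_unitblk // eqxx.
    by rewrite mulmx1.
  by rewrite mul1mx.
by rewrite [Q + c]addrC addrKA.
Qed.

Lemma sys_equiv_reduceR :
  sys_equiv (pencil k T - Q *m Mj) (pencil k.+1 (x *: T + Aj) - Q).
Proof.
have k_m := ltnW km.
set a := unitblk (x *: 1%:M) k.+1 k; set b := unitblk (x *: T) k k.+1.
exists (1%:M + a), (Mj_inv *m (1%:M + b)); split.
- by rewrite unitmx_1add_nilp // mul_unitblk // eqnSF.
- by rewrite unitmx_mul unitmx_fiedler_blk_inv unitmx_1add_nilp // mul_unitblk // eqSnF.
set c := hat a + hat b + hat (a *m b).
rewrite mulmxBr mulmxBl.
have -> : block_mx (1%:M + a) 0 0 1%:M *m pencil k T *m block_mx (Mj_inv *m (1%:M + b)) 0 0 1%:M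
    = pencil k.+1 (x *: T + Aj) + c.
  rewrite /pencil !scale_block_mx !mulmx_block !(mulmx0, mul0mx, addr0, add0r, mul1mx, mulmx1, scaler0).
  by rewrite mulmxA fiedler_blk_reduceR // /c !add_block_mx !addr0 !addrA.
have -> : block_mx (1%:M + a) 0 0 1%:M *m (Q *m Mj) *m block_mx (Mj_inv *m (1%:M + b)) 0 0 1%:M
    = Q + c.
  rewrite mulmxA -(mulmxA _ Mj) mulmx_block !(mulmx0, mul0mx, addr0, add0r, mul1mx, mulmx1).
  rewrite mulmxA /Mj_inv mul_fiedler_blkV // mul1mx -!add1_hat.
  rewrite (mulmx_1add_sandwich (E := E)) // ?mulmx_hat /c ?addrA // /a /b mul_unitblk // eqxx.
    by rewrite mulmx1.
  by rewrite mul1mx.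
by rewrite [Q + c]addrC addrKA.
Qed.

End Reduction.

Section FiedlerMatrices.
Variables (F : fieldType) (m n r : nat) (A : nat -> 'M[F]_n)
  (C : 'M[F]_(n, r)) (B : 'M[F]_(r, n)) (Ap Ep : 'M[F]_r).
Local Notation R := {poly F}.
Local Notation blkmx := (@blkmx R m n).
Local Notation diagblk := (@diagblk R m n).

Definition fiedlerX i : 'M[R]_(m * n + r) := map_mx polyC (fiedler_mx m A C B Ap Ep i).
Definition polyA i : 'M[R]_n := map_mx polyC (A i).
Definition emCX : 'M[R]_(m * n, r) := map_mx polyC (emC m C).
Definition emBX : 'M[R]_(r, m * n) := map_mx polyC (emB m B).

Lemma map_blockmx (f : nat -> nat -> 'M[F]_n) :
  map_mx polyC (blockmx m f) = blkmx (fun b c => map_mx polyC (f b c)).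
Proof. by apply/matrixP=> i j; rewrite !mxE. Qed.

Lemma fiedlerX_mid i : (0 < i < m)%N ->
  fiedlerX i = block_mx (blkmx (fun b c => map_mx polyC (Miblk m i (A i) b c))) 0 0 1%:M.
Proof.
case/andP=> i0 im; rewrite /fiedlerX /fiedler_mx (negbTE (lt0n_neq0 i0)) ltn_eqF //.
by rewrite map_block_mx map_blockmx !map_mx0 map_mx1.
Qed.

Lemma fiedlerX0 : fiedlerX 0%N =
  block_mx (blkmx (fun b c => map_mx polyC (M0blk m (A 0%N) b c))) (- emCX) (- emBX)
    (- map_mx polyC Ap).
Proof. by rewrite /fiedlerX /fiedler_mx eqxx map_block_mx map_blockmx !map_mxN. Qed.

Lemma fiedlerXm : (0 < m)%N ->
  fiedlerX m = block_mx (diagblk (pivot_diag 0%N (polyA m))) 0 0 (- map_mx polyC Ep).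
Proof.
move=> m0; rewrite /fiedlerX /fiedler_mx (negbTE (lt0n_neq0 m0)).
rewrite eqxx map_block_mx map_blockmx !map_mx0 map_mxN; congr block_mx.
apply: eq_blkmx => b c _ _; rewrite /Mmblk /pivot_diag ltn0 /=.
by case: (b == c); case: (b == 0%N); rewrite ?map_mx0 ?map_mx1.
Qed.

Lemma fiedlerX_fiedler_blk k : (k.+1 < m)%N ->
  fiedlerX (m - k.+1) = block_mx (fiedler_blk m k (polyA (m - k.+1))) 0 0 1%:M.
Proof.
move=> km; rewrite fiedlerX_mid; last by apply/andP; split; lia.
congr block_mx; rewrite /fiedler_blk /diagblk /unitblk !blkmxD.
apply: eq_blkmx => x y _ _; rewrite /Miblk -/(polyA _).
have -> : (m - (m - k.+1) - 1)%N = k by lia.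
blk_cases x k; blk_cases y k; blk_simp; rewrite ?map_mx0 ?map_mx1 ?map_mxN //.
all: by case: (x == y); rewrite ?map_mx0 ?map_mx1.
Qed.

Definition fiedler_supp i b :=
  if i == 0%N then b == m.-1 else (b == (m - i - 1)%N) || (b == (m - i - 1).+1).

Definition fiedler_dev i b c : 'M[R]_n :=
  map_mx polyC (if i == 0%N then M0blk m (A 0%N) b c else Miblk m i (A i) b c)
  - (if b == c then 1%:M else 0).

Lemma fiedler_dev_supp i b c : ~~ (fiedler_supp i b && fiedler_supp i c) ->
  fiedler_dev i b c = 0.
Proof.
rewrite /fiedler_supp /fiedler_dev; case: i => [|i] /=; last first.
  rewrite /Miblk /=; move: (m - i.+1 - 1)%N => k nsupp.
  blk_cases b k; blk_cases c k; move: nsupp; blk_simp => // _;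
    try case: ifP; by rewrite ?map_mx0 ?map_mx1 subrr.
rewrite /M0blk; have [?|bm] := eqVneq b m.-1; have [?|cm] := eqVneq c m.-1;
  subst => //= _.
- by rewrite (eq_sym m.-1 c) (negbTE cm) map_mx0 subrr.
- by rewrite (negbTE bm) map_mx0 subrr.
- by case: ifP; rewrite ?map_mx0 ?map_mx1 subrr.
Qed.

Lemma fiedlerX_1add i : (0 < i < m)%N ->
  fiedlerX i = 1%:M + block_mx (blkmx (fiedler_dev i)) 0 0 0.
Proof.
move=> im; rewrite fiedlerX_mid // (scalar_mx_block (m * n) r) add_block_mx !addr0.
congr block_mx; rewrite -blkmx1 blkmxD; apply: eq_blkmx => b c _ _.
by rewrite /fiedler_dev (negbTE (lt0n_neq0 (proj1 (andP im)))) addrC subrK.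
Qed.

Lemma fiedlerX0_1add : fiedlerX 0%N =
  1%:M + block_mx (blkmx (fiedler_dev 0%N)) (- emCX) (- emBX) (- map_mx polyC Ap - 1%:M).
Proof.
rewrite fiedlerX0 (scalar_mx_block (m * n) r) add_block_mx !add0r.
congr block_mx; last by rewrite addrC subrK.
rewrite -blkmx1 blkmxD; apply: eq_blkmx => b c _ _.
by rewrite /fiedler_dev /= addrC subrK.
Qed.

Lemma blkmx_emCX f : (forall b, f b m.-1 = 0) -> blkmx f *m emCX = 0.
Proof.
move=> f0; apply/matrixP=> p q; rewrite !mxE; apply: big1 => x _.
rewrite !mxE; case: eqP => [->|_]; last by rewrite mulr0.
by rewrite f0 mxE mul0r.
Qed.

Lemma emBX_blkmx f : (forall c, f m.-1 c = 0) -> emBX *m blkmx f = 0.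
Proof.
move=> f0; apply/matrixP=> p q; rewrite !mxE; apply: big1 => x _.
rewrite !mxE; case: eqP => [->|_]; last by rewrite mul0r.
by rewrite f0 mxE mulr0.
Qed.

Lemma fiedler_supp_disj i j d : (i.+2 <= j)%N -> (j < m)%N ->
  fiedler_supp i d -> ~~ fiedler_supp j d.
Proof.
rewrite /fiedler_supp; case: j => [|j] // ij jm /=.
by case: i ij => [|i] ij /=; [move=> /eqP ->|case/orP=> /eqP ->];
  apply/negP; case/orP=> /eqP; lia.
Qed.

Lemma fiedler_dev_last j b : (2 <= j)%N -> (j < m)%N ->
  fiedler_dev j b m.-1 = 0 /\ fiedler_dev j m.-1 b = 0.
Proof.
move=> j2 jm; have nsupp : ~~ fiedler_supp j m.-1.
  rewrite /fiedler_supp; case: j j2 jm => [|j] // j2 jm /=.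
  by apply/negP; case/orP=> /eqP; lia.
by split; apply: fiedler_dev_supp; rewrite ?(negbTE nsupp) ?andbF.
Qed.

(* Fiedler matrices with non-adjacent indices act on disjoint blocks. *)
Lemma fiedlerX_comm i j : (i.+2 <= j)%N -> (j < m)%N ->
  fiedlerX i *m fiedlerX j = fiedlerX j *m fiedlerX i.
Proof.
move=> ij jm; have j0 : (0 < j < m)%N by rewrite jm andbT (leq_trans _ ij).
have dij : blkmx (fiedler_dev i) *m blkmx (fiedler_dev j) = 0.
  apply: (@mulmx_blkmx_disjoint _ _ _ _ _ (fiedler_supp i) (fiedler_supp j));
    [exact: fiedler_dev_supp|exact: fiedler_dev_supp|].
  by move=> d /fiedler_supp_disj; apply.
have dji : blkmx (fiedler_dev j) *m blkmx (fiedler_dev i) = 0.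
  apply: (@mulmx_blkmx_disjoint _ _ _ _ _ (fiedler_supp j) (fiedler_supp i));
    [exact: fiedler_dev_supp|exact: fiedler_dev_supp|].
  by move=> d jd; apply/negP => /(fiedler_supp_disj ij jm); rewrite jd.
rewrite (fiedlerX_1add j0); have [i0|i0] := posnP i.
  rewrite i0 in ij dij dji *; rewrite fiedlerX0_1add; apply: commute_1addmx;
    rewrite mulmx_block !(mulmx0, mul0mx, addr0, add0r).
    rewrite dij mulNmx emBX_blkmx ?oppr0 ?block_mx0 // => c.
    by case: (fiedler_dev_last c ij jm).
  rewrite dji mulmxN blkmx_emCX ?oppr0 ?block_mx0 // => b.
  by case: (fiedler_dev_last b ij jm).
have im : (0 < i < m)%N by rewrite i0 /= (leq_ltn_trans _ jm) // (leq_trans _ ij) // leqW.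
rewrite (fiedlerX_1add im); apply: commute_1addmx;
  by rewrite mulmx_block !(mulmx0, mul0mx, addr0, add0r) ?dij ?dji block_mx0.
Qed.

End FiedlerMatrices.

Section FiedlerPencil.
Variables (F : fieldType) (m n r : nat) (A : nat -> 'M[F]_n)
  (C : 'M[F]_(n, r)) (B : 'M[F]_(r, n)) (Ap Ep : 'M[F]_r) (s : 'S_m).
Hypothesis hm : (1 < m)%N.
Local Notation R := {poly F}.
Local Notation fiedlerX := (fiedlerX m A C B Ap Ep).
Local Notation unitblk := (@unitblk R m n).

Definition fiedler_order : seq nat := [seq val ((s^-1)%g k) | k <- index_enum 'I_m].

Lemma fiedler_order_uniq : uniq fiedler_order.
Proof.
by rewrite map_inj_uniq ?index_enum_uniq // => a b /val_inj; apply: perm_inj.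
Qed.

Lemma mem_fiedler_order i : (i \in fiedler_order) = (i < m)%N.
Proof.
apply/mapP/idP => [[k _ ->]|im]; first exact: ltn_ord.
by exists (s (Ordinal im)); rewrite ?mem_index_enum // permK.
Qed.

Definition fiedler_prod j :=
  \big[mulmx/1%:M]_(i <- fiedler_order | (i <= j)%N) fiedlerX i.

Lemma map_fiedler_prod :
  map_mx polyC (\big[mulmx/1%:M]_(k < m) fiedler_mx m A C B Ap Ep ((s^-1)%g k))
  = fiedler_prod m.-1.
Proof.
rewrite (big_morph _ (@map_mxM _ _ (@polyC F) _ _ _) (map_mx1 (@polyC F) _)).
rewrite /fiedler_prod /fiedler_order big_map; apply: eq_bigl => k.
by rewrite -ltnS prednK ?ltn_ord // ltnW.
Qed.

Lemma fiedler_prod0 : fiedler_prod 0%N = fiedlerX 0%N.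
Proof.
rewrite /fiedler_prod -big_filter (eq_filter (a2 := pred1 0%N)) => [|i]; last by rewrite leqn0.
by rewrite filter_pred1_uniq ?fiedler_order_uniq ?mem_fiedler_order ?big_seq1 // ltnW.
Qed.

Lemma fiedler_prod_step j : (0 < j < m)%N ->
  fiedler_prod j = fiedlerX j *m fiedler_prod j.-1 \/
  fiedler_prod j = fiedler_prod j.-1 *m fiedlerX j.
Proof.
case/andP=> j0 jm; set u := [seq i <- fiedler_order | (i <= j)%N].
have u_mem i : (i \in u) = (i <= j)%N.
  by rewrite mem_filter mem_fiedler_order andb_idr // => /leq_ltn_trans; apply.
have <- : \big[mulmx/1%:M]_(i <- u | i != j) fiedlerX i = fiedler_prod j.-1.
  by rewrite big_filter_cond; apply: eq_bigl => i; rewrite andbC -ltn_neqAle; lia.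
rewrite /fiedler_prod -big_filter -/u; apply: (big_mulmx_extract (k := j.-1)).
- by rewrite filter_uniq ?fiedler_order_uniq.
- by rewrite u_mem.
- by rewrite u_mem leq_pred.
- by rewrite ltn_eqF // ltn_predL.
move=> i; rewrite u_mem => ij ij' ij''; apply: fiedlerX_comm => //; lia.
Qed.

Lemma fiedlerX_fix_blk k i : (k.+1 < m)%N -> (i <= m.-1 - k.+1)%N ->
  let E := block_mx (unitblk 1%:M k k) 0 0 (0 : 'M[R]_r) in
  fiedlerX i *m E = E /\ E *m fiedlerX i = E.
Proof.
move=> km ik E.
have kdiag b c : ~~ (pred1 k b && pred1 k c) ->
    (if (b == k) && (c == k) then 1%:M else 0) = 0 :> 'M[R]_n.
  by move=> /negbTE /= ->.
have supp_k d : fiedler_supp m i d -> ~~ pred1 k d.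
  rewrite /fiedler_supp /=; case: (i) ik => [|i'] ik /=;
    [move=> /eqP ->|case/orP=> /eqP ->]; apply/eqP; lia.
have devE : blkmx m (fiedler_dev m A i) *m unitblk 1%:M k k = 0.
  by apply: mulmx_blkmx_disjoint supp_k => //; apply: fiedler_dev_supp.
have Edev : unitblk 1%:M k k *m blkmx m (fiedler_dev m A i) = 0.
  apply: mulmx_blkmx_disjoint kdiag _ _ => //; first exact: fiedler_dev_supp.
  by move=> d kd; apply/negP => /supp_k; rewrite kd.
have last_k : (m.-1 == k) = false by apply/negbTE/eqP; lia.
case: i ik {supp_k} devE Edev => [|i] ik devE Edev.
  rewrite fiedlerX0_1add mulmxDl mulmxDr mul1mx mulmx1 /E !mulmx_block.
  rewrite !(mulmx0, mul0mx, addr0, add0r) devE Edev mulNmx mulmxN.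
  by rewrite emBX_blkmx ?blkmx_emCX ?oppr0 ?block_mx0 ?addr0 // => *; rewrite last_k ?andbF.
rewrite fiedlerX_1add; last by apply/andP; split; lia.
rewrite mulmxDl mulmxDr mul1mx mulmx1 /E !mulmx_block.
by rewrite !(mulmx0, mul0mx, addr0, add0r) devE Edev block_mx0 !addr0.
Qed.

Lemma fiedler_prod_fix_blk k : (k.+1 < m)%N ->
  let E := block_mx (unitblk 1%:M k k) 0 0 (0 : 'M[R]_r) in
  fiedler_prod (m.-1 - k.+1) *m E = E /\ E *m fiedler_prod (m.-1 - k.+1) = E.
Proof.
move=> km E; apply: (big_ind (fun M => M *m E = E /\ E *m M = E)).
- by rewrite mul1mx mulmx1.
- by move=> M N [ME EM] [NE EN]; rewrite -mulmxA NE ME mulmxA EM EN.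
- by move=> i; apply: fiedlerX_fix_blk.
Qed.

End FiedlerPencil.

Section Reduced.
Variables (F : fieldType) (m n r : nat) (A : nat -> 'M[F]_n)
  (C : 'M[F]_(n, r)) (B : 'M[F]_(r, n)) (Ap Ep : 'M[F]_r) (s : 'S_m).
Hypothesis hm : (1 < m)%N.
Local Notation R := {poly F}.
Local Notation fiedlerX := (fiedlerX m A C B Ap Ep).
Local Notation fiedler_prod := (fiedler_prod A C B Ap Ep s).

Fixpoint horner_tail (k : nat) : 'M[R]_n :=
  if k is k'.+1 then 'X *: horner_tail k' + polyA A (m - k) else polyA A m.

Definition reduced k : 'M[R]_(m * n + r) :=
  'X *: block_mx (diagblk m (pivot_diag k (horner_tail k))) 0 0 (- map_mx polyC Ep)
  - fiedler_prod (m.-1 - k).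

Lemma reduced0 : reduced 0%N = fiedler_pencil A C B Ap Ep s.
Proof.
rewrite /reduced /fiedler_pencil subn0 -map_fiedler_prod //.
by rewrite -[map_mx polyC (fiedler_mx m A C B Ap Ep m)]/(fiedlerX m) (fiedlerXm _ _ _ _ _ (ltnW hm)).
Qed.

Lemma reduced_step k : (k.+1 < m)%N -> sys_equiv (reduced k) (reduced k.+1).
Proof.
move=> km; have [QE EQ] := fiedler_prod_fix_blk A C B Ap Ep s hm km.
have j_m : (0 < m.-1 - k < m)%N by apply/andP; split; lia.
rewrite /reduced [horner_tail k.+1]/=.
have j1 : (m.-1 - k.+1)%N = (m.-1 - k).-1 by lia.
rewrite j1 in QE EQ *.
have jm : (m.-1 - k)%N = (m - k.+1)%N by lia.
have [->|->] := fiedler_prod_step A C B Ap Ep s hm j_m;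
  rewrite jm in QE EQ *; rewrite fiedlerX_fiedler_blk //.
- exact: sys_equiv_reduceL.
- exact: sys_equiv_reduceR.
Qed.

Lemma reduced_equiv k : (k < m)%N -> sys_equiv (reduced 0%N) (reduced k).
Proof.
elim: k => [|k IH] km; first exact: sys_equiv_refl.
exact: sys_equiv_trans (IH (ltnW km)) (reduced_step km).
Qed.

End Reduced.

Section LastReduction.
Variables (F : fieldType) (m n r : nat) (A : nat -> 'M[F]_n)
  (C : 'M[F]_(n, r)) (B : 'M[F]_(r, n)) (Ap Ep : 'M[F]_r) (s : 'S_m).
Hypothesis hm : (1 < m)%N.
Local Notation R := {poly F}.
Local Notation diagblk := (@diagblk R m n).

Definition matrix_poly : 'M[R]_n := \sum_(j < m.+1) 'X^j *: polyA A j.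

Lemma horner_tail_sum k : (k < m)%N ->
  horner_tail m A k = \sum_(i < k.+1) 'X^i *: polyA A (m - k + i).
Proof.
elim: k => [|k IH] km; first by rewrite big_ord1 expr0 scale1r subn0 addn0.
rewrite /= IH ?(ltnW km) // [RHS]big_ord_recl /= expr0 scale1r addn0 addrC scaler_sumr.
congr (_ + _); apply: eq_bigr => i _; rewrite scalerA -exprS /bump /= add1n.
by congr (_ *: polyA A _); lia.
Qed.

Lemma horner_tail_last : 'X *: horner_tail m A m.-1 + polyA A 0%N = matrix_poly.
Proof.
have m0 : (0 < m)%N by apply: ltnW.
rewrite horner_tail_sum ?prednK // /matrix_poly [RHS]big_ord_recl /= expr0 scale1r addrC.
rewrite scaler_sumr; congr (_ + _); apply: eq_bigr => i _.
by rewrite scalerA -exprS /bump /= add1n; congr (_ *: polyA A _); lia.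
Qed.

Definition sign_diag := diagblk (fun d => if d == m.-1 then 1%:M else - 1%:M).

Lemma unitmx_sign_diag : sign_diag \in unitmx.
Proof.
apply: (proj1 (@mulmx1_unit _ _ _ sign_diag _)).
rewrite /sign_diag mul_diagblk -diagblk1; apply: eq_blkmx => b c _ _.
by case: (b == c) => //; case: (b == m.-1); rewrite ?mulmx1 // mulmxN mulNmx mulmx1 opprK.
Qed.

Definition linearized : 'M[R]_(m * n + r) :=
  block_mx (diagblk (fun d => if d == m.-1 then matrix_poly else 1%:M)) (emCX m C) (emBX m B)
    (map_mx polyC Ap - 'X *: map_mx polyC Ep).

Lemma diagblk_emCX h : h m.-1 = 1%:M -> diagblk h *m emCX m C = emCX m C.
Proof.
move=> h1; have -> : diagblk h = 1%:M + blkmx m (fun b c => if b == c then h b - 1%:M else 0).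
  rewrite -blkmx1 blkmxD; apply: eq_blkmx => b c _ _.
  by case: (b == c); rewrite ?addr0 // addrC subrK.
rewrite mulmxDl mul1mx blkmx_emCX ?addr0 // => b.
by case: eqP => [->|]; rewrite ?h1 ?subrr.
Qed.

Lemma sign_diag_reduced :
  block_mx sign_diag 0 0 1%:M *m reduced A C B Ap Ep s m.-1 = linearized.
Proof.
rewrite /reduced subnn fiedler_prod0 // fiedlerX0 scale_block_mx opp_block_mx add_block_mx.
rewrite mulmx_block !(mulmx0, mul0mx, addr0, add0r, mul1mx, scaler0, opprK) /linearized.
congr block_mx; last by rewrite addrC scalerN.
  rewrite /sign_diag /diagblk blkmxZ blkmxN blkmxD mulmx_blkmx.
  apply: eq_blkmx => b c bm _; rewrite (bigD1 (Ordinal bm)) //= big1 => [|d]; last first.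
    by rewrite -val_eqE eq_sym => /negbTE /= ->; rewrite mul0mx.
  rewrite eqxx addr0 /M0blk /pivot_diag; case: (eqVneq b c) => [_|_]; last first.
    by rewrite ?scaler0 ?map_mx0 ?oppr0 ?addr0 ?mulmx0.
  case: (eqVneq b m.-1) => [->|bm1]; first by rewrite ltnn mul1mx map_mxN opprK horner_tail_last.
  have -> : (b < m.-1)%N by lia.
  by rewrite scaler0 add0r map_mx1 mulNmx mul1mx opprK.
by apply: diagblk_emCX; rewrite eqxx.
Qed.

End LastReduction.

Section Linearization.
Variables (F : fieldType) (m n r : nat) (A : nat -> 'M[F]_n)
  (C : 'M[F]_(n, r)) (B : 'M[F]_(r, n)) (Ap Ep : 'M[F]_r).
Hypothesis hm : (1 < m)%N.
Local Notation R := {poly F}.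

Lemma mul_predn_addn : (m.-1 * n + n = m * n)%N.
Proof. by case: m hm => [|m'] // _; rewrite /= mulSn addnC. Qed.

Lemma diagblk_last_cast (X : 'M[R]_n) :
  diagblk m (fun d => if d == m.-1 then X else 1%:M) =
  castmx (mul_predn_addn, mul_predn_addn) (block_mx (1%:M : 'M[R]_(m.-1 * n)) 0 0 X).
Proof.
apply/matrixP => p q; rewrite castmxE !mxE.
case: splitP => [i /= ip|i /= ip]; rewrite mxE; case: splitP => [j /= jq|j /= jq]; rewrite ?mxE /=.
- have pm : (p %/ n < m.-1)%N by apply: divn_blk_lt; rewrite ip.
  have -> : (i == j) = (p == q) by rewrite -!val_eqE /= ip jq.
  by rewrite eq_ord_blk (ltn_eqF pm); case: (_ == _); rewrite !mxE.
- have pm : (p %/ n < m.-1)%N by apply: divn_blk_lt; rewrite ip.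
  by have [-> _] := blk_last jq; rewrite (ltn_eqF pm) mxE.
- have qm : (q %/ n < m.-1)%N by apply: divn_blk_lt; rewrite jq.
  by have [-> _] := blk_last ip; rewrite eq_sym (ltn_eqF qm) mxE.
have [-> ->] := blk_last ip; have [-> ->] := blk_last jq.
by rewrite eqxx.
Qed.

Lemma emCX_cast :
  emCX m C = castmx (mul_predn_addn, erefl r) (col_mx (0 : 'M[R]_(m.-1 * n, r)) (map_mx polyC C)).
Proof.
apply/matrixP => p q; rewrite castmxE !mxE cast_ord_id.
case: splitP => [i /= ip|i /= ip]; rewrite ?mxE /=.
  by rewrite ltn_eqF // divn_blk_lt // ip.
by have [-> ->] := blk_last ip; rewrite eqxx.
Qed.

Lemma emBX_cast :
  emBX m B = castmx (erefl r, mul_predn_addn) (row_mx (0 : 'M[R]_(r, m.-1 * n)) (map_mx polyC B)).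
Proof.
apply/matrixP => p q; rewrite castmxE !mxE cast_ord_id.
case: splitP => [j /= jq|j /= jq]; rewrite ?mxE /=.
  by rewrite ltn_eqF // divn_blk_lt // jq.
by have [-> ->] := blk_last jq; rewrite eqxx.
Qed.

Lemma linearized_cast :
  linearized m A C B Ap Ep = castmx (rl_cast n r (ltnW hm), rl_cast n r (ltnW hm))
    (block_mx (1%:M : 'M[R]_(m.-1 * n)) 0 0 (syspoly m A C B Ap Ep)).
Proof.
have := @block_mxA _ _ _ _ _ _ _ (1%:M : 'M[R]_(m.-1 * n)) 0 0 0 (matrix_poly m A)
  (map_mx polyC C) 0 (map_mx polyC B) (map_mx polyC Ap - 'X *: map_mx polyC Ep).
cbv zeta; rewrite row_mx0 col_mx0 /syspoly -/(matrix_poly m A) => ->.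
by rewrite castmx_comp (castmx_block mul_predn_addn) -diagblk_last_cast -emCX_cast -emBX_cast.
Qed.

End Linearization.

Theorem theorem4p13 (F : fieldType) (n r m : nat) (hm : (1 < m)%N)
  (A : nat -> 'M[F]_n) (hAm : A m != 0)
  (C : 'M[F]_(n, r)) (B : 'M[F]_(r, n)) (Ap Ep : 'M[F]_r) (s : 'S_m) :
  rosenbrock_lin (rl_cast n r (ltnW hm))
    (fiedler_pencil A C B Ap Ep s) (syspoly m A C B Ap Ep).
Proof.
have [U [V [uU uV UV]]] : sys_equiv (fiedler_pencil A C B Ap Ep s) (linearized m A C B Ap Ep).
  rewrite -(reduced0 _ _ _ _ _ _ hm).
  have pm : (m.-1 < m)%N by rewrite ltn_predL ltnW.
  apply: sys_equiv_trans (reduced_equiv A C B Ap Ep s hm pm) _.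
  exists (sign_diag F m n), 1%:M; split; [exact: unitmx_sign_diag|exact: unitmx1|].
  by rewrite -scalar_mx_block mulmx1 sign_diag_reduced.
exists U, V; split; try exact: unitmx_unimodular.
by rewrite UV linearized_cast.
Qed.
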